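(* Consider the constrained queuing network described in the context, operating under the MUCF($f$) algorithm with $f$ non-decreasing, $f(0)=0$, and bi-Lipschitz with constant $\rho>1$, and with strictly admissible arrival rate vector $\lambda\in\{\sum_i\alpha_i\pi^i:\alpha_i\ge0,\ \pi^i\in\mathscr{S},\ \sum_i\alpha_i<1\}$. Let $Z_\tau=\frac{1}{\tau\log\tau}\sum_{i=1}^\tau|W(i)|$ and suppose there is a constant $C<\infty$ with $\mathbb{E}[Z_\tau]\le C$ for all $\tau\ge2$. Then $$\Pr\Big(\lim_{\tau\to\infty}\tfrac{1}{\tau}|W(\tau)|=0\Big)=1.$$
   Context: Constrained queuing network: $N$ queues, discrete time, unit-length packets, arrivals $A_n(\tau)\in\{0,1\}$ i.i.d. Bernoulli($\lambda_n$) over time and independent across queues. Finite monotone feasible schedule set $\mathscr{S}\subseteq\{0,1\}^N$ in which every queue is served by some schedule; $\mathscr{S}_{\max}$ its maximal elements. Dynamics $Q_n(\tau+1)=(Q_n(\tau)-S_n(\tau))^++A_n(\tau)$ with $S(\tau)\in\mathscr{S}$. Each packet has a predetermined destination among $M$ output queues. Shadow CFN: copies of arrivals immediately join their destination output queue, each served (at most one packet per slot) by a work-conserving single-queue policy; $d(p)$ is the departure time of packet $p$ from the shadow CFN. MUCF($f$): constrained queues are FIFO; output queues order packets by increasing $d(p)$; at time $\tau$, urgency $U_n(\tau)=\tau-d(p_n^\tau)$ for non-empty queue $n$ with head-of-line (HoL) packet $p_n^\tau$, and $U_n(\tau)=-\max\{0,-\min_{k:Q_k(\tau)>0}U_k(\tau)\}$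 for empty $n$; choose $S(\tau)\in\arg\max_{\pi\in\mathscr{S}_{\max}}\sum_nf(U_n(\tau))\pi_n$. $W_n(\tau)$ is the waiting time $\tau-a_n(\tau)$ of the HoL packet of queue $n$ ($a_n(\tau)$ its arrival time), or $0$ if queue $n$ is empty; $|W(\tau)|=\sum_nW_n(\tau)$. *)

From HB Require Import structures.
From mathcomp Require Import all_boot all_order all_algebra.
From mathcomp Require Import all_classical all_reals all_analysis.
Set Implicit Arguments. Unset Strict Implicit. Unset Printing Implicit Defensive.
Import Order.TTheory GRing.Theory Num.Theory.
Import numFieldNormedType.Exports.
Local Open Scope classical_set_scope.
Local Open Scope ring_scope.

(* A schedule: which of the N constrained queues are served in a slot. *)
Definition schedule (N : nat) := {ffun 'I_N -> bool}.

Definition monotone_sched (N : nat) (S : {set schedule N}) : Prop :=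
  forall pi pi' : schedule N, pi \in S -> (forall n, pi' n ==> pi n) -> pi' \in S.

Definition covers_all (N : nat) (S : {set schedule N}) : Prop :=
  forall n : 'I_N, exists2 pi, pi \in S & pi n.

Definition Smax (N : nat) (S : {set schedule N}) : {set schedule N} :=
  [set pi in S | [forall pi' in S, [forall n, pi n ==> pi' n] ==> (pi' == pi)]].

Definition strictly_admissible (R : realType) (N : nat) (S : {set schedule N})
  (lambda : 'I_N -> R) : Prop :=
  exists (k : nat) (alpha : 'I_k -> R) (pis : 'I_k -> schedule N),
    [/\ forall i, 0 <= alpha i, forall i, pis i \in S,
        \sum_(i < k) alpha i < 1 &
        forall n, lambda n = \sum_(i < k) alpha i * (pis i n)%:R].

(* Contents of constrained queue n at (the start of) slot tau, as the FIFO
   list of arrival times of the packets present (head = HoL packet), given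
   arrivals arr n t (= A_n(t)) and schedules s t; queues start empty. *)
Fixpoint qstate (N : nat) (arr : 'I_N -> nat -> bool)
  (s : nat -> schedule N) (tau : nat) (n : 'I_N) : seq nat :=
  match tau with
  | 0 => [::]
  | t.+1 => (if s t n then behead (qstate arr s t n) else qstate arr s t n)
            ++ (if arr n t then [:: t] else [::])
  end.

Definition Wq (N : nat) (arr : 'I_N -> nat -> bool) (s : nat -> schedule N)
  (n : 'I_N) (tau : nat) : nat :=
  if qstate arr s tau n is a :: _ then (tau - a)%N else 0%N.

Definition absW (N : nat) (arr : 'I_N -> nat -> bool) (s : nat -> schedule N)
  (tau : nat) : nat := (\sum_(n < N) Wq arr s n tau)%N.

(* Shadow CFN: dest n t is the (predetermined) destination output queue of the
   packet arriving at queue n in slot t, and dep n t its departure time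
   (the slot in which it is served) from the shadow CFN. The departure
   function of a work-conserving single-server policy at each output queue is
   characterised by: a packet becomes available after its arrival slot, each
   output queue serves at most one packet per slot, and an output queue that
   holds a packet in slot tau serves some packet in slot tau. *)
Definition shadow_cfn (N M : nat) (arr : 'I_N -> nat -> bool)
  (dest : 'I_N -> nat -> 'I_M) (dep : 'I_N -> nat -> nat) : Prop :=
  [/\ (forall n t, arr n t -> (t < dep n t)%N),
      (forall n t n' t', arr n t -> arr n' t' -> dest n t = dest n' t' ->
          dep n t = dep n' t' -> n = n' /\ t = t') &
      (forall (tau : nat) (m : 'I_M),
          (exists n t, [/\ arr n t, dest n t = m, (t < tau)%N & (tau <= dep n t)%N]) ->
          exists n t, [/\ arr n t, dest n t = m & dep n t = tau])].

Definition Uhol (N : nat) (arr : 'I_N -> nat -> bool) (s : nat -> schedule N)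
  (dep : 'I_N -> nat -> nat) (tau : nat) (n : 'I_N) : int :=
  if qstate arr s tau n is a :: _ then (tau%:Z - (dep n a)%:Z)%R else 0.

(* Urgency U_n(tau); for an empty queue
   -max{0, -min_{k nonempty} U_k} = -max(0, max_{k nonempty} (-U_k))
   (which is 0 when every queue is empty). *)
Definition urgency (N : nat) (arr : 'I_N -> nat -> bool) (s : nat -> schedule N)
  (dep : 'I_N -> nat -> nat) (tau : nat) (n : 'I_N) : int :=
  if qstate arr s tau n != [::] then Uhol arr s dep tau n
  else - \big[Num.max/0]_(k < N | qstate arr s tau k != [::]) (- Uhol arr s dep tau k).

Definition MUCF (R : realType) (N : nat) (S : {set schedule N}) (f : R -> R)
  (arr : 'I_N -> nat -> bool) (dep : 'I_N -> nat -> nat)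
  (s : nat -> schedule N) : Prop :=
  forall tau : nat,
    s tau \in Smax S /\
    forall pi, pi \in Smax S ->
      \sum_(n < N) f (urgency arr s dep tau n)%:~R * (pi n)%:R
      <= \sum_(n < N) f (urgency arr s dep tau n)%:~R * (s tau n)%:R.

Definition good_f (R : realType) (f : R -> R) (rho : R) : Prop :=
  [/\ 1 < rho, {homo f : x y / x <= y}, f 0 = 0 &
      forall x y, `|x - y| / rho <= `|f x - f y| <= rho * `|x - y|].

Definition mutually_independent_bool (d : measure_display) (T : measurableType d)
  (R : realType) (P : probability T R) (I : eqType) (X : I -> T -> bool) : Prop :=
  forall (F : seq I) (b : I -> bool), uniq F ->
    P (\bigcap_(i in [set` F]) [set w | X i w = b i]) =
    (\prod_(i <- F) P [set w | X i w = b i])%E.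

Definition Zt (R : realType) (N : nat) (arr : 'I_N -> nat -> bool)
  (s : nat -> schedule N) (tau : nat) : R :=
  (tau%:R * ln tau%:R)^-1 * \sum_(1 <= i < tau.+1) (absW arr s i)%:R.

From HB Require Import structures.
From mathcomp Require Import all_boot all_order all_algebra.
From mathcomp Require Import all_classical all_reals all_analysis.
From mathcomp Require Import zify ring measurable_realfun.
Set Implicit Arguments. Unset Strict Implicit. Unset Printing Implicit Defensive.
Import Order.TTheory GRing.Theory Num.Theory.
Import numFieldNormedType.Exports.
Local Open Scope classical_set_scope.
Local Open Scope ring_scope.

(* If |W(t)| >= t/2^m, then
   |W| stays above t/2^(m+1) on a window of length of order t/2^m before t,
   forcing sum_{i <= t} |W(i)| >= c t^2.  The nonnegative series
   sum_k 2^-(k+1) Z_(8^(k+1)) has expectation at most C, hence is finite almost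
   surely, and then sum_{i <= 8^(k+1)} |W(i)| = O(16^k k) = o(64^k), which rules
   out |W(t)| >= t/2^m for large t. *)

Section QueueDynamics.
Variables (N : nat) (arr : 'I_N -> nat -> bool) (s : nat -> schedule N).

Lemma qstate_sorted_lt tau n :
  sorted leq (qstate arr s tau n) && all (fun x => x < tau)%N (qstate arr s tau n).
Proof.
elim: tau => [|t /andP[IHs IHa]] //=.
set q := (if s t n then _ else _).
have [Hq_sorted Hq_lt] : sorted leq q /\ all (fun x => x < t)%N q.
  rewrite /q; case: (s t n) => //.
  case: (qstate arr s t n) IHs IHa => //= a l Hs /andP[_ Ha]; split => //.
  exact: path_sorted Hs.
have Hq_le : all (fun x => x < t.+1)%N q by apply/allP => x /(allP Hq_lt) /ltnW.
case: (arr n t); rewrite ?cats0 ?Hq_sorted //.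
rewrite all_cat /= ltnSn Hq_le !andbT.
case: q Hq_sorted Hq_lt {Hq_le} => // b l Hs Ha.
rewrite /= in Hs; rewrite /= cat_path Hs /= andbT.
exact/ltnW/(allP Ha)/mem_last.
Qed.

Lemma Wq_succ_le n t : (Wq arr s n t.+1 <= Wq arr s n t + 1)%N.
Proof.
rewrite /Wq /=.
have /andP[] := qstate_sorted_lt t n.
case: (qstate arr s t n) => [|a l] Hs Ha.
  by case: (s t n); case: (arr n t) => //=; rewrite subSnn.
have a_lt_t : (a < t)%N by case/andP: Ha.
case: (s t n) => /=; last by lia.
case: l Hs {Ha} => [|b l] Hs /=.
  by case: (arr n t) => //=; rewrite subSnn; lia.
have : (a <= b)%N by case/andP: Hs.
lia.
Qed.

Lemma absW_succ_le t : (absW arr s t.+1 <= absW arr s t + N)%N.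
Proof.
rewrite /absW -[X in (_ <= _ + X)%N](card_ord N) -sum1_card -big_split /=.
by apply: leq_sum => n _; exact: Wq_succ_le.
Qed.

End QueueDynamics.

Lemma qstate_ext N (arr1 arr2 : 'I_N -> nat -> bool) (s1 s2 : nat -> schedule N) tau :
  (forall n t, (t < tau)%N -> arr1 n t = arr2 n t) ->
  (forall t, (t < tau)%N -> s1 t = s2 t) ->
  forall n, qstate arr1 s1 tau n = qstate arr2 s2 tau n.
Proof.
elim: tau => [|t IH] Harr Hs n //=.
by rewrite IH ?Harr ?Hs // => [n' t'|t'] lt_t't; [apply: Harr | apply: Hs]; lia.
Qed.

Lemma Zt_ext R N (arr1 arr2 : 'I_N -> nat -> bool) (s1 s2 : nat -> schedule N) tau :
  (forall n t, (t < tau)%N -> arr1 n t = arr2 n t) ->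
  (forall t, (t < tau)%N -> s1 t = s2 t) ->
  Zt R arr1 s1 tau = Zt R arr2 s2 tau.
Proof.
move=> Harr Hs; rewrite /Zt; congr (_ * _).
apply: eq_big_nat => i /andP[_ le_i_tau]; congr (_%:R).
apply: eq_bigr => n _; rewrite /Wq (@qstate_ext _ arr1 arr2 s1 s2) // => [n' t|t] lt_ti.
- by apply: Harr; lia.
- by apply: Hs; lia.
Qed.

Lemma Zt_ge0 R N (arr : 'I_N -> nat -> bool) (s : nat -> schedule N) tau :
  0 <= Zt R arr s tau.
Proof.
rewrite /Zt mulr_ge0 ?sumr_ge0 // invr_ge0 mulr_ge0 //.
by case: tau => [|t]; [rewrite ln0 | rewrite ln_ge0 // ler1n].
Qed.

Local Close Scope ring_scope.
Local Close Scope classical_set_scope.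

Section SlowGrowth.
Variables (a : nat -> nat) (N : nat).
Hypothesis a_succ_le : forall t, a t.+1 <= a t + N.

Definition psum t := \sum_(1 <= i < t.+1) a i.

Lemma le_sub_steps j t : j <= t -> a t <= a (t - j) + N * j.
Proof.
elim: j => [|j IH] le_jt; first by rewrite subn0 muln0 addn0.
have := IH (ltnW le_jt); have := a_succ_le (t - j.+1).
have -> : (t - j.+1).+1 = t - j by lia.
lia.
Qed.

Lemma psum_homo : {homo psum : t t' / t <= t'}.
Proof.
by move=> t t' le_tt'; rewrite /psum [leqRHS](@big_cat_nat _ _ _ t.+1) //= leq_addr.
Qed.

Lemma psum_window_lb L t : L <= t -> L * (a t - N * L) <= psum t.
Proof.
move=> le_Lt; rewrite /psum (@big_cat_nat _ _ _ (t.+1 - L)) //=; try lia.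
apply: leq_trans (leq_addl _ _).
rewrite -[X in X * _](_ : t.+1 - (t.+1 - L) = L); last by lia.
rewrite -sum_nat_const_nat big_nat_cond [leqRHS]big_nat_cond.
apply: leq_sum => i /andP[/andP[lo hi] _].
have := @le_sub_steps (t - i) t (leq_subr i t).
have -> : t - (t - i) = i by lia.
have : N * (t - i) <= N * L by apply: leq_mul; lia.
lia.
Qed.

(* If [t < a t * 2^m] with [8^k <= t < 8^(k+1)], the window of length
   [2^(3k - m - N.+1)] gives [psum t >= 2^(6k - 2m - N.+2)], which exceeds
   [V * 32^k] once [2^k > V * 2^(2m + N.+2)]. *)
Lemma eventually_le_pow2 V m :
  (forall k, psum (8 ^ k.+1) <= V * 32 ^ k) ->
  exists K, forall t, K <= t -> a t * 2 ^ m <= t.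
Proof.
move=> psum_le; set p := N.+1; set B := V * 2 ^ (2 * m + p + 1).
exists (8 ^ (B + m + p)) => t le_Kt.
have t_gt0 : 0 < t by apply: leq_trans le_Kt; rewrite expn_gt0.
set k := trunc_log 8 t.
have k_ge : B + m + p <= k by exact: trunc_log_max.
have lo : 8 ^ k <= t by exact: trunc_logP.
have hi : t < 8 ^ k.+1 by exact: trunc_log_ltn.
have pow8 j : 8 ^ j = 2 ^ (3 * j) by rewrite expnM.
rewrite leqNgt; apply/negP => lt_t_at.
set x := 3 * k - m; set L := 2 ^ (x - p).
have at_gt : 2 ^ x < a t.
  rewrite -(ltn_pmul2r (expn_gt0 2 m)) -expnD (_ : x + m = 3 * k); last by lia.
  by rewrite -pow8; apply: leq_ltn_trans lo lt_t_at.
have NL_le : N * L <= 2 ^ (x - 1).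
  rewrite (_ : x - 1 = N + (x - p)); last by lia.
  by rewrite expnD leq_mul2r; apply/orP; right; exact/ltnW/ltn_expl.
have half_le : 2 ^ (x - 1) <= a t - N * L.
  have : 2 ^ x = 2 ^ (x - 1) + 2 ^ (x - 1).
    by rewrite addnn -mul2n -expnS; congr (2 ^ _); lia.
  lia.
have L_le : L <= t by apply: leq_trans lo; rewrite pow8 leq_exp2l //; lia.
have window := leq_trans (leq_mul (leqnn L) half_le) (psum_window_lb L_le).
have upper := leq_trans (@psum_homo _ _ (ltnW hi)) (psum_le k).
have : 2 ^ k * 2 ^ (5 * k) <= B * 2 ^ (5 * k).
  have -> : 2 ^ k * 2 ^ (5 * k) = L * 2 ^ (x - 1) * 2 ^ (2 * m + p + 1).
    by rewrite -!expnD; congr (2 ^ _); lia.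
  have -> : B * 2 ^ (5 * k) = V * 32 ^ k * 2 ^ (2 * m + p + 1).
    by rewrite /B (_ : 32 = 2 ^ 5) // -expnM mulnAC.
  by rewrite leq_mul2r (leq_trans window upper) orbT.
rewrite leq_pmul2r ?expn_gt0 // => le_2k_B.
have : B < 2 ^ k by apply: leq_trans (ltn_expl B (ltnSn 1)) _; rewrite leq_exp2l //; lia.
lia.
Qed.

End SlowGrowth.

Local Open Scope classical_set_scope.
Local Open Scope ring_scope.

Lemma cvg_ratio0_of_pow2 (R : realType) (a : nat -> nat) :
  (forall m, exists K, forall t, (K <= t)%N -> (a t * 2 ^ m <= t)%N) ->
  (fun t => (a t)%:R / t%:R : R) @ \oo --> 0.
Proof.
move=> Ha; apply/cvgrPdist_lt => e e_gt0.
have [m lt_inve] : exists m, e^-1 < (2 ^ m)%:R :> R.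
  exists (Num.truncn e^-1).+1; apply: lt_le_trans (truncnS_gt _) _.
  by rewrite ler_nat ltnW // ltn_expl.
have [K HK] := Ha m.
near=> t.
have t_gt0 : 0 < t%:R :> R by rewrite ltr0n; near: t; exists K.+1 => // t /=; lia.
have le_at : (a t)%:R * (2 ^ m)%:R <= t%:R :> R.
  by rewrite -natrM ler_nat HK //; near: t; exists K.
rewrite sub0r normrN ger0_norm ?divr_ge0 // ltr_pdivrMr //.
apply: (le_lt_trans (y := t%:R / (2 ^ m)%:R)); first by rewrite ler_pdivlMr ?ltr0n ?expn_gt0.
by rewrite mulrC ltr_pM2r // invf_plt ?posrE ?ltr0n ?expn_gt0.
Unshelve. all: by end_near.
Qed.

(* [ln (8^(k+1)) <= 8 (k+1) <= 8 * 2^(k+1)] turns the bound into [256 v 32^k]. *)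
Lemma psum_le_of_Zt_bound (R : realType) (a : nat -> nat) (v : R) k :
  ((2 ^ k.+1)%:R)^-1 * (((8 ^ k.+1)%:R * ln (8 ^ k.+1)%:R)^-1 *
      \sum_(1 <= i < (8 ^ k.+1).+1) (a i)%:R) <= v ->
  (psum a (8 ^ k.+1) <= 256 * (Num.truncn v).+1 * 32 ^ k)%N.
Proof.
set X : R := (8 ^ k.+1)%:R.
have X_gt1 : 1 < X by rewrite ltr1n (leq_trans _ (leq_pexp2l _ (ltn0Sn k))).
have lnX_gt0 : 0 < ln X by exact: ln_gt0.
have lnX_le : ln X <= 8 * (2 ^ k.+1)%:R.
  rewrite /X natrX lnXn ?ltr0n // -[ln _ *+ _]mulr_natr; apply: ler_pM => //.
  - by rewrite ln_ge0 // ler1n.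
  - by rewrite ltW // ln_sublinear.
  - by rewrite ler_nat ltnW // ltn_expl.
have den_gt0 : 0 < (2 ^ k.+1)%:R * (X * ln X) by rewrite !mulr_gt0 ?ltr0n ?expn_gt0 // (lt_trans ltr01).
rewrite mulrA -invfM mulrC ler_pdivrMr // => le_sum_v.
set T : R := (Num.truncn v).+1%:R.
have v_le : v <= T by exact/ltW/truncnS_gt.
rewrite -(ler_nat R) /psum natr_sum; apply: le_trans le_sum_v _.
apply: le_trans (ler_wpM2r (ltW den_gt0) v_le) _.
apply: (le_trans (y := T * ((2 ^ k.+1)%:R * (X * (8 * (2 ^ k.+1)%:R))))).
  by rewrite ler_wpM2l ?ler_wpM2l // mulr_ge0 // (le_trans ler01 (ltW X_gt1)).
rewrite /X /T -!natrM ler_nat -[32%N]/(2 * 8 * 2)%N !expnMn !expnS.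
apply: eq_leq; ring.
Qed.

Lemma cvg_ratio0_of_Zt_bound (R : realType) (a : nat -> nat) (N : nat) (v : R) :
  (forall t, (a t.+1 <= a t + N)%N) ->
  (forall k, ((2 ^ k.+1)%:R)^-1 * (((8 ^ k.+1)%:R * ln (8 ^ k.+1)%:R)^-1 *
      \sum_(1 <= i < (8 ^ k.+1).+1) (a i)%:R) <= v) ->
  (fun t => (a t)%:R / t%:R : R) @ \oo --> 0.
Proof.
move=> a_succ_le Zt_le; apply: cvg_ratio0_of_pow2 => m.
apply: (eventually_le_pow2 a_succ_le m) => k.
exact: psum_le_of_Zt_bound (Zt_le k).
Qed.

Section NonnegativeSeries.
Local Open Scope ereal_scope.

Lemma nneseries_ge_term (R : realType) (u : (\bar R)^nat) k :
  (forall n, 0 <= u n) -> u k <= \sum_(n <oo) u n.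
Proof.
move=> u_ge0; apply: le_trans (nneseries_lim_ge k.+1 (fun n _ _ => u_ge0 n)).
by rewrite big_nat_recr //= leeDr // sume_ge0.
Qed.

Lemma eseries_geometric_half (R : realType) (c : R) :
  \sum_(k <oo) (((2 ^ k.+1)%:R)^-1 * c)%:E = c%:E.
Proof.
apply: cvg_lim => //; have := @cvg_geometric_eseries_half R c 0.
rewrite expr0 divr1; apply: cvg_trans; apply: near_eq_cvg; near=> n.
by apply: eq_bigr => k _; rewrite mulrC addn1.
Unshelve. all: by end_near.
Qed.

Lemma ae_fin_nneseries d (T : measurableType d) (R : realType)
    (mu : {measure set T -> \bar R}) (g : nat -> T -> \bar R) (c : R) :
  (forall k, measurable_fun setT (g k)) -> (forall k w, 0 <= g k w) ->
  \sum_(k <oo) \int[mu]_w g k w <= c%:E ->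
  {ae mu, forall w, \sum_(k <oo) g k w \is a fin_num}.
Proof.
move=> g_meas g_ge0 sum_le.
have series_ge0 w : 0 <= \sum_(k <oo) g k w by apply: nneseries_ge0 => k _ _.
have : mu.-integrable setT (fun w => \sum_(k <oo) g k w).
  apply/integrableP; split; first exact: ge0_emeasurable_sum.
  under eq_integral do rewrite gee0_abs //.
  by rewrite integral_nneseries //; apply: le_lt_trans sum_le (ltry _).
by move/(integrable_ae measurableT); apply: filterS => w; exact.
Qed.

End NonnegativeSeries.

Section HistoryMeasurability.
Context d (T : measurableType d) (N : nat).

Lemma measurable_fun_factor (K : finType) (key : T -> K)
    d' (U : measurableType d') (F : T -> U) :
  (forall k, measurable [set w | key w = k]) ->
  (forall w w', key w = key w' -> F w = F w') -> measurable_fun setT F.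
Proof.
move=> key_meas F_key _ B _; rewrite setTI.
rewrite (_ : F @^-1` B =
    \bigcup_(k in [set k | exists2 w, key w = k & B (F w)]) [set w | key w = k]).
  by apply: fin_bigcup_measurable => //; exact: finite_finset.
apply/seteqP; split => [w Bw | w [k [w' <- Bw'] /= key_ww']].
  by exists (key w) => //; exists w.
by rewrite /preimage /= (F_key w w').
Qed.

Variables (A : 'I_N -> nat -> T -> bool) (sched : T -> nat -> schedule N).
Hypothesis A_meas : forall n t, measurable [set w | A n t w].
Hypothesis sched_meas : forall t pi, measurable [set w | sched w t = pi].

Definition history tau (w : T) :=
  ([ffun p : 'I_N * 'I_tau => A p.1 p.2 w], [ffun i : 'I_tau => sched w i]).

Lemma measurable_history_fiber tau k : measurable [set w | history tau w = k].
Proof.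
rewrite (_ : [set w | history tau w = k] =
  (\bigcap_(p in [set: 'I_N * 'I_tau]) [set w | A p.1 p.2 w = k.1 p]) `&`
  (\bigcap_(i in [set: 'I_tau]) [set w | sched w i = k.2 i])).
  apply: measurableI; apply: fin_bigcap_measurable; try exact: finite_finset.
    move=> p _; case: (k.1 p); first exact: A_meas.
    rewrite (_ : [set w | _] = ~` [set w | A p.1 p.2 w]); first exact: measurableC.
    by apply/seteqP; split => w /=; case: (A _ _ w).
  by move=> i _; exact: sched_meas.
apply/seteqP; split => [w <- | w [/= hA hs]]; first by split => p _ /=; rewrite ffunE.
by case: k hA hs => kA ks /= hA hs; congr pair; apply/ffunP => p; rewrite ffunE ?hA ?hs.
Qed.

Lemma measurable_fun_history tau d' (U : measurableType d') (F : T -> U) :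
  (forall w w', (forall n t, (t < tau)%N -> A n t w = A n t w') ->
     (forall t, (t < tau)%N -> sched w t = sched w' t) -> F w = F w') ->
  measurable_fun setT F.
Proof.
move=> F_hist; apply: (measurable_fun_factor (@measurable_history_fiber tau)).
move=> w w' eq_hist; apply: F_hist => [n t lt_t | t lt_t].
- by move: eq_hist => /(congr1 fst)/ffunP/(_ (n, Ordinal lt_t)); rewrite !ffunE.
- by move: eq_hist => /(congr1 snd)/ffunP/(_ (Ordinal lt_t)); rewrite !ffunE.
Qed.

End HistoryMeasurability.

Theorem lemma2 (d : measure_display) (T : measurableType d) (R : realType)
  (P : probability T R) (N M : nat) (S : {set schedule N})
  (dest : 'I_N -> nat -> 'I_M) (f : R -> R) (rho : R) (lambda : 'I_N -> R)
  (A : 'I_N -> nat -> T -> bool)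
  (dep : T -> 'I_N -> nat -> nat) (sched : T -> nat -> schedule N) (C : R) :
  monotone_sched S -> covers_all S ->
  good_f f rho ->
  strictly_admissible S lambda ->
  (forall n t, measurable [set w | A n t w]) ->
  (forall n t, P [set w | A n t w] = (lambda n)%:E) ->
  mutually_independent_bool P (fun it : 'I_N * nat => A it.1 it.2) ->
  (forall w, shadow_cfn (fun n t => A n t w) dest (dep w)) ->
  (forall w, MUCF S f (fun n t => A n t w) (dep w) (sched w)) ->
  (forall tau pi, measurable [set w | sched w tau = pi]) ->
  (forall tau : nat, (2 <= tau)%N ->
     (\int[P]_w (Zt R (fun n t => A n t w) (sched w) tau)%:E <= C%:E)%E) ->
  {ae P, forall w, (fun tau : nat => (absW (fun n t => A n t w) (sched w) tau)%:R / tau%:R : R)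
                     @ \oo --> (0 : R)}.
Proof.
move=> _ _ _ _ A_meas _ _ _ _ sched_meas EZ_le.
pose Z tau w := Zt R (fun n t => A n t w) (sched w) tau.
pose g k w := ((((2 ^ k.+1)%:R)^-1)%:E * (Z (8 ^ k.+1)%N w)%:E)%E.
have Z_meas tau : measurable_fun setT (fun w => (Z tau w)%:E).
  apply: (measurable_fun_history A_meas sched_meas (tau := tau)) => w w' hA hs.
  by rewrite /Z (Zt_ext _ hA hs).
have g_ge0 k w : (0 <= g k w)%E by rewrite mule_ge0 ?lee_fin ?Zt_ge0.
have g_meas k : measurable_fun setT (g k).
  by apply: emeasurable_funM => //; exact: measurable_cst.
have Eg_le : (\sum_(k <oo) \int[P]_w g k w <= C%:E)%E.
  rewrite -eseries_geometric_half; apply: lee_nneseries => [k _ _|k _].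
    exact: integral_ge0.
  rewrite ge0_integralZl_EFin // ?EFinM ?lee_wpmul2l ?EZ_le //.
  - by rewrite (leq_trans _ (leq_pexp2l _ (ltn0Sn k))).
  - by move=> w _; rewrite lee_fin Zt_ge0.
apply: filterS (ae_fin_nneseries g_meas g_ge0 Eg_le) => w series_fin.
apply: (cvg_ratio0_of_Zt_bound (N := N) (v := fine (\sum_(k <oo) g k w))) => [t|k].
  exact: absW_succ_le.
by rewrite -lee_fin fineK // EFinM; exact: (nneseries_ge_term (u := g^~ w) k (g_ge0^~ w)).
Qed.
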